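(* Let $k\in\mathbb Z$ and $c_k:=\frac14-9k^2$. Then $\partial_xv_k=c_kv_{k-1}$ in $(0,\infty)\times\mathbb R$, and for every $t\in\mathbb R$, $$c_k\Lambda_{k-1}(t)=\frac{(1+t^2)^{1/2}}{3}\Big(\big(\tfrac12+3k\big)\Lambda_k(t)-t(1+t^2)\Lambda_k'(t)\Big).$$
   Context: Let $M(a,b,\zeta)=\sum_{n\ge0}\frac{(a)_n}{(b)_n}\frac{\zeta^n}{n!}$ be Kummer's function. For $k\in\mathbb Z$ define $$\Lambda_k(t)=9^{\frac16+k}(1+t^2)^{-\frac14-\frac{3k}2}\Big[\tfrac{\Gamma(1/3)}{\Gamma(1/6-k)}M\big(-\tfrac16-k,\tfrac23,-\tfrac{t^3}{9}\big)-\tfrac{t}{9^{1/3}}\tfrac{\Gamma(-1/3)}{\Gamma(-1/6-k)}M\big(\tfrac16-k,\tfrac43,-\tfrac{t^3}{9}\big)\Big],$$ and for $x>0$, $z\in\mathbb R$, $v_k(x,z):=r^{\frac12+3k}\Lambda_k(t)$ with $r=(z^2+x^{2/3})^{1/2}$, $t=zx^{-1/3}$. *)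

From Stdlib Require Import Reals Lra ZArith.
From Coquelicot Require Import Coquelicot.
Open Scope R_scope.

Fixpoint poch (a : R) (n : nat) : R :=
  match n with
  | O => 1
  | S m => poch a m * (a + INR m)
  end.

Definition kummerM (a b z : R) : R :=
  Series (fun n => poch a n / poch b n * z ^ n / INR (fact n)).

(* Euler's Gamma function via Gauss' limit formula
   Gamma(x) = lim_n n! n^x / (x (x+1) ... (x+n)),
   valid for x not a non-positive integer (only such x are used below). *)
Definition Gamma (x : R) : R :=
  real (Lim_seq (fun n => INR (fact n) * Rpower (INR n) x / poch x (S n))).

Definition Lambda (k : Z) (t : R) : R :=
  let kr := IZR k in
  Rpower 9 (1/6 + kr) * Rpower (1 + t^2) (-1/4 - 3 * kr / 2) *
  ( Gamma (1/3) / Gamma (1/6 - kr) * kummerM (-1/6 - kr) (2/3) (- t^3 / 9)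
  - t / Rpower 9 (1/3) * (Gamma (-1/3) / Gamma (-1/6 - kr))
      * kummerM (1/6 - kr) (4/3) (- t^3 / 9) ).

Definition v (k : Z) (x z : R) : R :=
  let r := sqrt (z^2 + Rpower x (2/3)) in
  let t := z * Rpower x (-1/3) in
  Rpower r (1/2 + 3 * IZR k) * Lambda k t.

Definition c (k : Z) : R := 1/4 - 9 * (IZR k)^2.

From Stdlib Require Import Reals Lra Lia ZArith.
From Coquelicot Require Import Coquelicot.
Open Scope R_scope.

(* Both claims reduce to one algebraic identity between the Kummer functions of
   [Lambda (k - 1)] and [Lambda k]. Passing from [k] to [k - 1] raises both Kummer
   parameters [a] by one and both Gamma arguments by one; the contiguous relation
   [a M(a+1,b,z) = a M(a,b,z) + z M'(a,b,z)] and [Gamma(x+1) = x Gamma(x)] express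
   everything through [Lambda k] and its derivative, and the identity becomes a
   rational-function identity. Gamma is only known through Gauss' limit, so its
   recurrence and non-vanishing off the poles are proved by showing that the
   logarithms of the Gauss sequence form a convergent series. The derivative of
   [v k] in [x] is then the chain rule together with [t = z / x^(1/3)] and
   [sqrt (1 + t^2) = r / x^(1/3)]. *)

Definition not_pole (x : R) : Prop := forall n : nat, x + INR n <> 0.

Lemma not_pole_neq0 x : not_pole x -> x <> 0.
Proof. intros Hx. specialize (Hx O). simpl in Hx. lra. Qed.

Lemma not_pole_succ x : not_pole x -> not_pole (x + 1).
Proof. intros Hx n. rewrite Rplus_assoc, Rplus_comm with 1 (INR n), <- S_INR. apply Hx. Qed.

Lemma not_pole_sixth (k : Z) (q : R) : q = 1/6 \/ q = -1/6 -> not_pole (q - IZR k).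
Proof.
  intros Hq n H. rewrite INR_IZR_INZ in H.
  assert (H6 : IZR (6 * (Z.of_nat n - k)) = - 6 * q) by (rewrite mult_IZR, minus_IZR; lra).
  destruct Hq as [-> | ->]; [ replace (- 6 * (1/6)) with (IZR (-1)) in H6 by (simpl; lra)
                            | replace (- 6 * (-1/6)) with (IZR 1) in H6 by (simpl; lra) ];
    apply eq_IZR in H6; lia.
Qed.

Lemma poch_neq0 x n : not_pole x -> poch x n <> 0.
Proof.
  intros Hx. induction n as [|n IH]; simpl; [lra|].
  now apply Rmult_integral_contrapositive_currified.
Qed.

Lemma poch_gt0 b n : 0 < b -> 0 < poch b n.
Proof.
  intros Hb. induction n as [|n IH]; simpl; [lra|].
  apply Rmult_lt_0_compat; [exact IH | pose proof (pos_INR n); lra].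
Qed.

Lemma poch_Sl a n : poch a (S n) = a * poch (a + 1) n.
Proof.
  induction n as [|n IH]; [simpl; ring|].
  change (poch a (S (S n))) with (poch a (S n) * (a + INR (S n))).
  rewrite IH, S_INR. simpl. ring.
Qed.

Lemma is_series_telescoping (f : nat -> R) (l : R) :
  is_lim_seq f l -> is_series (fun n => f n - f (S n)) (f O - l).
Proof.
  intros Hf.
  assert (Hsum : forall n, f O - f (S n) = sum_n (fun j => f j - f (S j)) n).
  { induction n as [|n IH]; [now rewrite sum_O|].
    rewrite sum_Sn, <- IH. unfold plus; simpl. ring. }
  assert (H : is_lim_seq (sum_n (fun j => f j - f (S j))) (f O - l)).
  { apply (is_lim_seq_ext _ _ _ Hsum), is_lim_seq_minus'; [apply is_lim_seq_const|].
    now apply is_lim_seq_incr_1 in Hf. }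
  exact H.
Qed.

Lemma ln_diff_bounds a b : 0 < a -> 0 < b -> (b - a) / b <= ln b - ln a <= (b - a) / a.
Proof.
  intros Ha Hb.
  assert (Hln : forall y, 0 < y -> ln y <= y - 1).
  { intros y Hy. rewrite <- (ln_exp (y - 1)).
    apply ln_le; [exact Hy | pose proof (exp_ineq1_le (y - 1)); lra]. }
  pose proof (Hln (a / b) ltac:(apply Rdiv_lt_0_compat; lra)) as Hab.
  pose proof (Hln (b / a) ltac:(apply Rdiv_lt_0_compat; lra)) as Hba.
  rewrite ln_div in Hab, Hba by lra.
  split.
  - replace ((b - a) / b) with (- (a / b - 1)) by (field; lra). lra.
  - replace ((b - a) / a) with (b / a - 1) by (field; lra). lra.
Qed.

Definition gauss_seq (x : R) (n : nat) : R :=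
  INR (fact n) * Rpower (INR n) x / poch x (S n).

Definition gauss_log_ratio (x : R) (n : nat) : R :=
  x * (ln (INR (S n)) - ln (INR n)) - (ln (x + INR (S n)) - ln (INR (S n))).

Lemma gauss_seq_neq0 x n : not_pole x -> gauss_seq x n <> 0.
Proof.
  intros Hx. unfold gauss_seq, Rdiv.
  repeat apply Rmult_integral_contrapositive_currified.
  - apply INR_fact_neq_0.
  - apply Rgt_not_eq, exp_pos.
  - now apply Rinv_neq_0_compat, poch_neq0.
Qed.

Lemma gauss_seq_S x n : not_pole x -> 0 < INR n -> 0 < x + INR (S n) ->
  gauss_seq x (S n) = gauss_seq x n * exp (gauss_log_ratio x n).
Proof.
  intros Hx Hn Hxn.
  assert (HSn : 0 < INR (S n)) by (rewrite S_INR; lra).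
  unfold gauss_seq, gauss_log_ratio, Rpower.
  rewrite fact_simpl, mult_INR.
  change (poch x (S (S n))) with (poch x (S n) * (x + INR (S n))).
  replace (x * (ln (INR (S n)) - ln (INR n)) - (ln (x + INR (S n)) - ln (INR (S n))))
    with (ln (INR (S n)) + x * ln (INR (S n)) + - (x * ln (INR n)) + - ln (x + INR (S n)))
    by ring.
  rewrite !exp_plus, !exp_Ropp, !exp_ln by lra.
  pose proof (poch_neq0 x (S n) Hx). pose proof (exp_pos (x * ln (INR n))).
  field. repeat split; try lra; auto.
Qed.

Lemma gauss_log_ratio_bound x n : 2 * Rabs x + 2 < INR n ->
  Rabs (gauss_log_ratio x n) <= (Rabs x + 2 * x ^ 2) * (/ INR n - / INR (S n)).
Proof.
  intros Hn. unfold gauss_log_ratio. rewrite !S_INR. set (a := INR n) in *.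
  pose proof (Rabs_pos x).
  assert (Ha : 0 < a) by lra.
  assert (Hx : - (a / 2) < x < a / 2) by (destruct (Rabs_def2 x (a / 2)); lra).
  set (u := ln (a + 1) - ln a).
  set (w := ln (x + (a + 1)) - ln (a + 1)).
  assert (Hu : / (a + 1) <= u <= / a).
  { pose proof (ln_diff_bounds a (a + 1) Ha ltac:(lra)). unfold u.
    replace (/ (a + 1)) with ((a + 1 - a) / (a + 1)) by (field; lra).
    replace (/ a) with ((a + 1 - a) / a) by (field; lra). lra. }
  assert (Hw : x / (x + a + 1) <= w <= x / (a + 1)).
  { pose proof (ln_diff_bounds (a + 1) (x + (a + 1)) ltac:(lra) ltac:(lra)) as Hln.
    unfold w. replace (x + a + 1) with (x + (a + 1)) by ring.
    replace (x + (a + 1) - (a + 1)) with x in Hln by ring. lra. }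
  assert (Eu : Rabs (x * (u - / (a + 1))) <= Rabs x * (/ a - / (a + 1))).
  { rewrite Rabs_mult. apply Rmult_le_compat_l; [apply Rabs_pos|].
    rewrite Rabs_right; lra. }
  assert (Ew : x / (a + 1) - x / (x + a + 1) <= 2 * x ^ 2 * (/ a - / (a + 1))).
  { replace (x / (a + 1) - x / (x + a + 1)) with (x ^ 2 * / ((a + 1) * (x + a + 1)))
      by (field; lra).
    replace (2 * x ^ 2 * (/ a - / (a + 1))) with (x ^ 2 * / ((a / 2) * (a + 1)))
      by (field; lra).
    apply Rmult_le_compat_l; [apply pow2_ge_0|].
    apply Rinv_le_contravar; [apply Rmult_lt_0_compat|]; nra. }
  replace (x * u - w) with (x * (u - / (a + 1)) + (x / (a + 1) - w)) by (field; lra).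
  eapply Rle_trans; [apply Rabs_triang|].
  rewrite (Rabs_right (x / (a + 1) - w)) by lra. lra.
Qed.

Lemma is_lim_seq_inv_INR_add (N : nat) : is_lim_seq (fun j => / INR (j + N)) 0.
Proof.
  apply (is_lim_seq_inv _ p_infty); [|discriminate].
  exact (proj1 (is_lim_seq_incr_n INR N p_infty) is_lim_seq_INR).
Qed.

Lemma gauss_seq_cvg x : not_pole x -> exists L, L <> 0 /\ is_lim_seq (gauss_seq x) L.
Proof.
  intros Hx.
  destruct (INR_unbounded (2 * Rabs x + 2)) as [N HN].
  assert (Hlarge : forall j, 2 * Rabs x + 2 < INR (j + N)).
  { intro j. rewrite plus_INR. pose proof (pos_INR j). lra. }
  set (e j := gauss_log_ratio x (j + N)).
  set (D := Rabs x + 2 * x ^ 2).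
  assert (He : ex_series e).
  { apply (@ex_series_le R_AbsRing R_CompleteNormedModule e
             (fun j => D * / INR (j + N) - D * / INR (S j + N))).
    - intro j. change (Rabs (e j) <= D * / INR (j + N) - D * / INR (S (j + N))).
      rewrite <- Rmult_minus_distr_l. apply gauss_log_ratio_bound, Hlarge.
    - eexists. apply (is_series_telescoping (fun j => D * / INR (j + N))).
      apply (is_lim_seq_scal_l _ D 0), is_lim_seq_inv_INR_add. }
  assert (Hprod : forall m, gauss_seq x (S (m + N)) = gauss_seq x N * exp (sum_n e m)).
  { assert (Hstep : forall j, gauss_seq x (S (j + N)) = gauss_seq x (j + N) * exp (e j)).
    { intro j. pose proof (Hlarge j). pose proof (Rabs_pos x).
      apply gauss_seq_S; [exact Hx | lra |].
      rewrite S_INR. destruct (Rabs_def2 x (INR (j + N))); lra. }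
    induction m as [|m IH].
    - now rewrite sum_O, Hstep.
    - rewrite sum_Sn, (Hstep (S m)).
      change (S m + N)%nat with (S (m + N)). rewrite IH, exp_plus. apply Rmult_assoc. }
  exists (gauss_seq x N * exp (Series e)). split.
  - apply Rmult_integral_contrapositive_currified;
      [apply gauss_seq_neq0, Hx | apply Rgt_not_eq, exp_pos].
  - apply (is_lim_seq_incr_n _ (S N)).
    apply (is_lim_seq_ext (fun m => gauss_seq x N * exp (sum_n e m))).
    { intro m. now rewrite <- plus_n_Sm, Hprod. }
    apply is_lim_seq_mult'; [apply is_lim_seq_const|].
    apply is_lim_seq_continuous; [apply derivable_continuous_pt, derivable_pt_exp|].
    apply (Series_correct _ He).
Qed.

Lemma Gamma_neq0 x : not_pole x -> Gamma x <> 0.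
Proof.
  intros Hx. destruct (gauss_seq_cvg x Hx) as [L [HL0 HL]].
  unfold Gamma. fold (gauss_seq x). now rewrite (is_lim_seq_unique _ _ HL).
Qed.

Lemma is_lim_seq_INR_div_add y : is_lim_seq (fun n => INR (S n) / (y + INR (S n))) 1.
Proof.
  assert (H : is_lim_seq (fun n => / (1 + y * / INR (n + 1))) (/ (1 + y * 0))).
  { apply (is_lim_seq_inv _ (1 + y * 0)); [|injection; lra].
    apply is_lim_seq_plus'; [apply is_lim_seq_const|].
    apply is_lim_seq_mult'; [apply is_lim_seq_const | apply is_lim_seq_inv_INR_add]. }
  replace (/ (1 + y * 0)) with 1 in H by field.
  revert H. apply is_lim_seq_ext. intro n.
  rewrite Nat.add_1_r. assert (0 < INR (S n)) by (apply lt_0_INR; lia).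
  replace (1 + y * / INR (S n)) with ((y + INR (S n)) * / INR (S n)) by (field; lra).
  rewrite Rinv_mult, Rinv_inv. unfold Rdiv. ring.
Qed.

Lemma Gamma_succ x : not_pole x -> Gamma (x + 1) = x * Gamma x.
Proof.
  intros Hx. destruct (gauss_seq_cvg x Hx) as [L [_ HL]].
  assert (Hshift : forall n, gauss_seq (x + 1) (S n)
                           = x * gauss_seq x (S n) * (INR (S n) / (x + 1 + INR (S n)))).
  { intro n. unfold gauss_seq.
    assert (HSn : 0 < INR (S n)) by (apply lt_0_INR; lia).
    rewrite (poch_Sl x (S n)).
    change (poch (x + 1) (S (S n))) with (poch (x + 1) (S n) * (x + 1 + INR (S n))).
    rewrite Rpower_plus, Rpower_1 by exact HSn.
    pose proof (poch_neq0 (x + 1) (S n) (not_pole_succ x Hx)).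
    assert (x + 1 + INR (S n) <> 0).
    { replace (x + 1 + INR (S n)) with (x + INR (S (S n))) by (rewrite (S_INR (S n)); ring).
      apply Hx. }
    pose proof (not_pole_neq0 x Hx). field. auto. }
  assert (H : is_lim_seq (gauss_seq (x + 1)) (x * L * 1)).
  { apply is_lim_seq_incr_1.
    apply (is_lim_seq_ext _ _ _ (fun n => eq_sym (Hshift n))).
    apply is_lim_seq_mult'; [apply is_lim_seq_mult'; [apply is_lim_seq_const|]|].
    - now apply is_lim_seq_incr_1 in HL.
    - apply is_lim_seq_INR_div_add. }
  unfold Gamma. fold (gauss_seq x) (gauss_seq (x + 1)).
  rewrite (is_lim_seq_unique _ _ H), (is_lim_seq_unique _ _ HL). simpl. ring.
Qed.

Definition kummer_coef (a b : R) (n : nat) : R := poch a n / poch b n / INR (fact n).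

Definition kummer_deriv (a b z : R) : R := PSeries (PS_derive (kummer_coef a b)) z.

Lemma kummerM_PSeries a b z : kummerM a b z = PSeries (kummer_coef a b) z.
Proof. apply Series_ext. intro n. unfold kummer_coef, Rdiv. ring. Qed.

Lemma kummer_coef_S a b n : 0 < b -> not_pole a ->
  kummer_coef a b (S n) = kummer_coef a b n * ((a + INR n) / ((b + INR n) * INR (S n))).
Proof.
  intros Hb Ha. unfold kummer_coef.
  change (fact (S n)) with (S n * fact n)%nat. rewrite mult_INR.
  change (poch a (S n)) with (poch a n * (a + INR n)).
  change (poch b (S n)) with (poch b n * (b + INR n)).
  pose proof (pos_INR n). pose proof (poch_gt0 b n Hb). pose proof (INR_fact_neq_0 n).
  assert (0 < INR (S n)) by (apply lt_0_INR; lia).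
  field. repeat split; lra.
Qed.

Lemma kummer_coef_neq0 a b n : not_pole a -> 0 < b -> kummer_coef a b n <> 0.
Proof.
  intros Ha Hb. unfold kummer_coef, Rdiv.
  repeat apply Rmult_integral_contrapositive_currified.
  - apply poch_neq0, Ha.
  - apply Rinv_neq_0_compat, Rgt_not_eq, poch_gt0, Hb.
  - apply Rinv_neq_0_compat, INR_fact_neq_0.
Qed.

Lemma CV_radius_kummer_coef a b : not_pole a -> 0 < b -> CV_radius (kummer_coef a b) = p_infty.
Proof.
  intros Ha Hb. apply CV_radius_infinite_DAlembert.
  - intro n. now apply kummer_coef_neq0.
  - (* the ratio of consecutive coefficients is [(1 + (a - b) / (b + n)) / (n + 1)] *)
    assert (Hinv : is_lim_seq (fun n => / (b + INR n)) 0).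
    { apply (is_lim_seq_inv _ p_infty); [|discriminate].
      apply (is_lim_seq_plus _ _ b p_infty); [apply is_lim_seq_const | apply is_lim_seq_INR | reflexivity]. }
    assert (H : is_lim_seq (fun n => (1 + (a - b) * / (b + INR n)) * / INR (n + 1))
                  ((1 + (a - b) * 0) * 0)).
    { apply is_lim_seq_mult'; [|apply is_lim_seq_inv_INR_add].
      apply is_lim_seq_plus'; [apply is_lim_seq_const|].
      apply is_lim_seq_mult'; [apply is_lim_seq_const | exact Hinv]. }
    rewrite Rmult_0_r in H.
    rewrite <- Rabs_R0. apply (is_lim_seq_abs _ 0). revert H.
    apply is_lim_seq_ext. intro n.
    rewrite kummer_coef_S, Nat.add_1_r by assumption.
    pose proof (kummer_coef_neq0 a b n Ha Hb). pose proof (pos_INR n).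
    assert (0 < INR (S n)) by (apply lt_0_INR; lia).
    field. repeat split; lra.
Qed.

Lemma is_derive_kummerM a b z : not_pole a -> 0 < b ->
  is_derive (kummerM a b) z (kummer_deriv a b z).
Proof.
  intros Ha Hb. apply (is_derive_ext (PSeries (kummer_coef a b))).
  - intro t. symmetry. apply kummerM_PSeries.
  - apply is_derive_PSeries. now rewrite CV_radius_kummer_coef.
Qed.

Lemma Derive_kummerM a b z : not_pole a -> 0 < b ->
  Derive (fun x => kummerM a b x) z = kummer_deriv a b z.
Proof. intros Ha Hb. now apply is_derive_unique, is_derive_kummerM. Qed.

Lemma kummerM_contiguous a b z : not_pole a -> 0 < b ->
  a * kummerM (a + 1) b z = a * kummerM a b z + z * kummer_deriv a b z.
Proof.
  intros Ha Hb.
  assert (Hex : forall a', not_pole a' -> ex_pseries (kummer_coef a' b) z).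
  { intros a' Ha'. apply CV_radius_inside. now rewrite CV_radius_kummer_coef. }
  rewrite !kummerM_PSeries. unfold kummer_deriv. rewrite <- PSeries_incr_1.
  (* coefficientwise: [a (a+1)_n - a (a)_n = n (a)_n] *)
  enough (H : PSeries (PS_minus (PS_scal a (kummer_coef (a + 1) b)) (PS_scal a (kummer_coef a b))) z
              = PSeries (PS_incr_1 (PS_derive (kummer_coef a b))) z).
  { rewrite PSeries_minus, !PSeries_scal in H; [lra | ..];
      apply ex_pseries_scal; [apply Rmult_comm | apply Hex, not_pole_succ, Ha
                             | apply Rmult_comm | apply Hex, Ha]. }
  apply PSeries_ext. intros [|n].
  - change (a * kummer_coef (a + 1) b 0 + - (a * kummer_coef a b 0) = 0).
    unfold kummer_coef. simpl poch. ring.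
  - change (a * kummer_coef (a + 1) b (S n) + - (a * kummer_coef a b (S n))
            = INR (S n) * kummer_coef a b (S n)).
    assert (Hpoch : a * poch (a + 1) (S n) = poch a (S n) * (a + INR (S n)))
      by (rewrite <- poch_Sl; reflexivity).
    unfold kummer_coef, Rdiv.
    replace (a * (poch (a + 1) (S n) * / poch b (S n) * / INR (fact (S n))))
      with (a * poch (a + 1) (S n) * / poch b (S n) * / INR (fact (S n))) by ring.
    rewrite Hpoch.
    pose proof (poch_gt0 b (S n) Hb). pose proof (INR_fact_neq_0 (S n)).
    field. split; lra.
Qed.

Lemma is_derive_Rpower_id y e : 0 < y ->
  is_derive (fun x => Rpower x e) y (e / y * Rpower y e).
Proof.
  intros Hy. apply is_derive_Reals.
  replace (e / y * Rpower y e) with (e * Rpower y (e - 1)).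
  - now apply derivable_pt_lim_power.
  - unfold Rminus. rewrite Rpower_plus, Rpower_Ropp, Rpower_1 by exact Hy. field. lra.
Qed.

Lemma Derive_Rpower_id y e : 0 < y ->
  Derive (fun x => Rpower x e) y = e / y * Rpower y e.
Proof. intros Hy. now apply is_derive_unique, is_derive_Rpower_id. Qed.

Definition Lambda_deriv (k : Z) (t : R) : R :=
  let kr := IZR k in
  let e := -1/4 - 3 * kr / 2 in
  let s := - t^3 / 9 in
  let ds := - t^2 / 3 in
  let A := Gamma (1/3) / Gamma (1/6 - kr) in
  let B := Gamma (-1/3) / Gamma (-1/6 - kr) in
  let c3 := Rpower 9 (1/3) in
  let F := A * kummerM (-1/6 - kr) (2/3) s - t / c3 * B * kummerM (1/6 - kr) (4/3) s in
  let dF := A * (ds * kummer_deriv (-1/6 - kr) (2/3) s)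
            - (1 / c3 * B * kummerM (1/6 - kr) (4/3) s
               + t / c3 * B * (ds * kummer_deriv (1/6 - kr) (4/3) s)) in
  Rpower 9 (1/6 + kr) *
    (e * (2 * t) / (1 + t^2) * Rpower (1 + t^2) e * F + Rpower (1 + t^2) e * dF).

Lemma is_derive_Lambda k t : is_derive (Lambda k) t (Lambda_deriv k t).
Proof.
  assert (Ht : 0 < 1 + t^2) by nra.
  pose proof (not_pole_sixth k (1/6) (or_introl eq_refl)) as Hplus.
  pose proof (not_pole_sixth k (-1/6) (or_intror eq_refl)) as Hminus.
  unfold Lambda. auto_derive.
  - repeat split; eexists;
      [apply is_derive_Rpower_id; nra | apply is_derive_kummerM; [assumption | lra] ..].
  - rewrite Derive_Rpower_id, !Derive_kummerM;
      [| assumption | lra | assumption | lra | nra].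
    unfold Lambda_deriv. cbv zeta.
    replace (t * (t * (t * 1))) with (t^3) by ring.
    replace (t * (t * 1)) with (t^2) by ring.
    pose proof (Gamma_neq0 _ Hplus). pose proof (Gamma_neq0 _ Hminus).
    assert (0 < Rpower 9 (1/3)) by apply exp_pos.
    unfold Rdiv in *. field. repeat split; lra.
Qed.

Lemma Derive_Lambda k t : Derive (Lambda k) t = Lambda_deriv k t.
Proof. apply is_derive_unique, is_derive_Lambda. Qed.

Lemma Lambda_pred_eq k t : c k * Lambda (k - 1) t =
  sqrt (1 + t^2) / 3 * ((1/2 + 3 * IZR k) * Lambda k t - t * (1 + t^2) * Lambda_deriv k t).
Proof.
  assert (Hshift : forall q, q = 1/6 \/ q = -1/6 ->
            q - IZR (k - 1) = q - IZR k + 1 /\ not_pole (q - IZR k)).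
  { intros q Hq. rewrite minus_IZR. split; [simpl; ring | apply not_pole_sixth, Hq]. }
  destruct (Hshift (1/6) (or_introl eq_refl)) as [E1 N1].
  destruct (Hshift (-1/6) (or_intror eq_refl)) as [E2 N2].
  unfold Lambda, Lambda_deriv, c. cbv zeta. rewrite E1, E2.
  rewrite (Gamma_succ _ N1), (Gamma_succ _ N2).
  assert (HM : forall a b z, not_pole a -> 0 < b ->
             kummerM (a + 1) b z = (a * kummerM a b z + z * kummer_deriv a b z) / a).
  { intros a b z Ha Hb. rewrite <- kummerM_contiguous by assumption.
    field. now apply not_pole_neq0. }
  rewrite (HM _ _ _ N1), (HM _ _ _ N2) by lra.
  assert (T : 0 < 1 + t^2) by nra.
  (* the prefactors of [Lambda (k - 1)] are those of [Lambda k] times [9^-1] and [(1 + t^2)^(3/2)] *)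
  rewrite minus_IZR.
  replace (1/6 + (IZR k - IZR 1)) with ((1/6 + IZR k) + Ropp 1) by (simpl; ring).
  replace (-1/4 - 3 * (IZR k - IZR 1) / 2) with ((-1/4 - 3 * IZR k / 2) + (1 + /2))
    by (simpl; field).
  rewrite Rpower_plus, Rpower_Ropp, Rpower_1, (Rpower_plus _ (1 + /2)), (Rpower_plus 1 (/2)),
    (Rpower_1 (1 + t^2)), Rpower_sqrt by lra.
  pose proof (Gamma_neq0 _ N1). pose proof (Gamma_neq0 _ N2).
  pose proof (not_pole_neq0 _ N1). pose proof (not_pole_neq0 _ N2).
  assert (0 < Rpower 9 (1/3)) by apply exp_pos.
  field. repeat split; lra.
Qed.

Lemma is_derive_v k x z : 0 < x ->
  is_derive (fun x' => v k x' z) x (c k * v (k - 1) x z).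
Proof.
  intros Hx. unfold v.
  assert (Hr2 : 0 < z * (z * 1) + Rpower x (2/3)).
  { assert (0 < Rpower x (2/3)) by apply exp_pos. nra. }
  assert (Hr : 0 < sqrt (z * (z * 1) + Rpower x (2/3))) by (apply sqrt_lt_R0, Hr2).
  set (p := 1/2 + 3 * IZR k).
  set (t := z * Rpower x (-1/3)).
  auto_derive.
  - repeat split; try exact Hr2; eexists;
      [apply is_derive_Rpower_id .. | apply is_derive_Lambda | apply is_derive_Rpower_id]; assumption.
  - rewrite !Derive_Rpower_id by assumption.
    fold t. rewrite Derive_Lambda.
    set (q := Rpower _ (1/2 + 3 * IZR (k - 1))).
    replace (c k * (q * Lambda (k - 1) t)) with (q * (c k * Lambda (k - 1) t)) by ring.
    rewrite Lambda_pred_eq. unfold q.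
    (* with [X = x^(1/3)] and [r = sqrt (z^2 + X^2)]: [t = z / X] and [sqrt (1 + t^2) = r / X] *)
    replace (1/2 + 3 * IZR (k - 1)) with (p + - INR 3)
      by (rewrite minus_IZR; unfold p; simpl; ring).
    rewrite Rpower_plus, Rpower_Ropp, Rpower_pow by exact Hr.
    replace (z ^ 2) with (z * (z * 1)) by ring.
    set (X := Rpower x (1/3)).
    assert (HX : 0 < X) by apply exp_pos.
    assert (X2 : Rpower x (2/3) = X * X) by (unfold X; rewrite <- Rpower_plus; f_equal; field).
    assert (Xm : Rpower x (-1/3) = / X) by (unfold X; rewrite <- Rpower_Ropp; f_equal; field).
    assert (X3 : x = X * X * X).
    { unfold X. rewrite <- !Rpower_plus. replace (1/3 + 1/3 + 1/3) with 1 by field.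
      now rewrite Rpower_1. }
    unfold t. rewrite X2, Xm. rewrite X2 in Hr.
    set (r := sqrt (z * (z * 1) + X * X)) in *.
    assert (R2 : r * r = z * (z * 1) + X * X) by (apply sqrt_sqrt; nra).
    assert (E : 1 + (z * / X) ^ 2 = (r / X) ^ 2).
    { replace ((r / X) ^ 2) with (r * r / (X * X)) by (field; lra). rewrite R2. field. lra. }
    rewrite E, sqrt_pow2 by (apply Rlt_le, Rdiv_lt_0_compat; assumption).
    fold p. clearbody X r. subst x.
    assert (0 < Rpower r p) by apply exp_pos.
    field. lra.
Qed.

Theorem lemma2p14 (k : Z) :
  (forall x z : R, 0 < x ->
     is_derive (fun x' => v k x' z) x (c k * v (k - 1)%Z x z)) /\
  (forall t : R,
     ex_derive (Lambda k) t /\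
     c k * Lambda (k - 1)%Z t =
       sqrt (1 + t^2) / 3 *
       ((1/2 + 3 * IZR k) * Lambda k t - t * (1 + t^2) * Derive (Lambda k) t)).
Proof.
  split.
  - intros x z Hx. now apply is_derive_v.
  - intros t. split.
    + eexists. apply is_derive_Lambda.
    + rewrite Derive_Lambda. apply Lambda_pred_eq.
Qed.
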